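(* If there exists a $(g,4;1)$-difference matrix over $\mathbb Z_g$, then there exists a $[2,2]$-GDC$(6)$ of type $g^4$ with size $2g^2$.
   Context: A $(g,4;1)$-difference matrix over $\mathbb Z_g$ is a $4\times g$ matrix $M=[m_{i,j}]$ with entries in $\mathbb Z_g$ such that for each $1\le r<s\le 4$, the differences $m_{r,j}-m_{s,j}$, $1\le j\le g$, comprise all elements of $\mathbb Z_g$. Ternary codes: a ternary code on a finite set $X$ is a subset $\mathcal C\subseteq\mathbb Z_3^X$; Hamming distance between $u,v$ is $|\{x:u_x\neq v_x\}|$; $u$ has composition $[w_1,w_2]$ if exactly $w_1$ coordinates equal $1$ and exactly $w_2$ equal $2$. A $[w_1,w_2]$-GDC$(d)$ is a triple $(X,\mathcal G,\mathcal C)$ where $\mathcal G$ is a partition of $X$ into groups and $\mathcal C\subseteq\mathbb Z_3^X$ is such that every codeword has composition $[w_1,w_2]$, any two distinct codewords have Hamming distance at least $d$, and every codeword has at most one nonzero coordinate in each group. Its type is the multiset of group sizes, written in exponential notation ($g^u$ means $u$ groups of size $g$); its size is $|\mathcal C|$. *)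

From mathcomp Require Import all_boot all_order all_algebra.
Set Implicit Arguments. Unset Strict Implicit. Unset Printing Implicit Defensive.
Import GRing.Theory.
Local Open Scope ring_scope.

Definition difference_matrix (g : nat) (M : 'M['Z_g]_(4, g)) : Prop :=
  forall r s : 'I_4, (r < s)%N ->
    forall z : 'Z_g, exists j : 'I_g, M r j - M s j = z.

Definition hamming (X : finType) (u v : {ffun X -> 'Z_3}) : nat :=
  #|[set x | u x != v x]|.

Definition has_composition (X : finType) (u : {ffun X -> 'Z_3}) (w1 w2 : nat) : Prop :=
  #|[set x | u x == 1%R]| = w1 /\ #|[set x | u x == 2%:R%R]| = w2.

Definition is_GDC (X : finType) (G : {set {set X}}) (C : {set {ffun X -> 'Z_3}})
    (w1 w2 d : nat) : Prop :=
  [/\ partition G [set: X],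
      (forall u, u \in C -> has_composition u w1 w2),
      (forall u v, u \in C -> v \in C -> u != v -> (d <= hamming u v)%N)
    & (forall u B, u \in C -> B \in G -> (#|[set x in B | u x != 0%R]| <= 1)%N)].

Definition GDC_type_uniform (X : finType) (G : {set {set X}}) (g u : nat) : Prop :=
  #|G| = u /\ (forall B, B \in G -> #|B| = g).

From mathcomp Require Import all_boot all_order all_algebra.
Set Implicit Arguments. Unset Strict Implicit. Unset Printing Implicit Defensive.
Import GRing.Theory.

(* The points are 'I_4 * Z_g, grouped by row.  For a column j of the
   difference matrix, a translate a in Z_g and a class e in {0,1}, the codeword
   has one nonzero entry per row i, at M i j + a, shifted by e in rows 2 and 3;
   its symbols are 1,1,2,2 when e = 0 and 2,2,1,1 when e = 1.  If two codewords
   agree in position in two rows with the same shift, the differences of those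
   two rows of M force the same column, and then the same translate.  Hence two
   codewords of the same class share a position in at most one row (distance
   >= 2 * 3), and two codewords of different classes, whose symbols differ in
   every row, share positions in at most two rows (distance >= 8 - 2). *)

Lemma hammingxx (X : finType) (u : {ffun X -> 'Z_3}) : hamming u u = 0%N.
Proof. by apply/eqP; rewrite cards_eq0; apply/eqP/setP => x; rewrite !inE eqxx. Qed.

Section SpreadWord.
Variables I Z : finType.

Definition spread_word (p : I -> Z) (s : I -> 'Z_3) : {ffun I * Z -> 'Z_3} :=
  [ffun x => if x.2 == p x.1 then s x.1 else 0%R].

Definition row (i : I) : {set I * Z} := [set x | x.1 == i].

Lemma hamming_line (p q : Z) (s t : 'Z_3) : s != 0%R -> t != 0%R ->
  \sum_(z : Z) ((if z == p then s else 0%R) != (if z == q then t else 0%R) : nat) =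
  (if p == q then (s != t : nat) else 2).
Proof.
move=> s0 t0; have [<-|npq] := eqVneq p q.
  by rewrite (bigD1 p) //= eqxx big1 ?addn0 // => z /negPf ->; rewrite eqxx.
rewrite (bigD1 p) //= (bigD1 q) /=; last by rewrite eq_sym.
rewrite !eqxx ifN // ifN 1?eq_sym // !(eq_sym 0%R) s0 t0 big1 ?addn0 //.
by move=> z /andP[/negPf -> /negPf ->]; rewrite eqxx.
Qed.

Lemma hamming_spread_word p q s t :
  (forall i, s i != 0%R) -> (forall i, t i != 0%R) ->
  hamming (spread_word p s) (spread_word q t) =
  \sum_(i : I) (if p i == q i then (s i != t i : nat) else 2).
Proof.
move=> s0 t0; rewrite /hamming -sum1_card big_mkcond /=.
transitivity (\sum_(i : I) \sum_(z : Z)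
    (spread_word p s (i, z) != spread_word q t (i, z) : nat)).
  by rewrite pair_big /=; apply: eq_bigr => -[i z] _; rewrite inE; case: (_ != _).
apply: eq_bigr => i _; rewrite -hamming_line //.
by apply: eq_bigr => z _; rewrite !ffunE.
Qed.

Lemma card_spread_word_eq p s (c : 'Z_3) : c != 0%R ->
  #|[set x | spread_word p s x == c]| = #|[set i | s i == c]|.
Proof.
move=> c0; rewrite -(card_imset _ (f := fun i => (i, p i))); last by move=> i k [].
apply: eq_card => -[i z]; rewrite inE ffunE /=; apply/idP/imsetP.
  have [-> sc|_] := eqVneq z (p i); last by rewrite eq_sym (negPf c0).
  by exists i; rewrite ?inE.
by case=> k; rewrite inE => /eqP sk [-> ->]; rewrite eqxx sk.
Qed.

Lemma card_spread_word_row p s i :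
  (#|[set x in row i | spread_word p s x != 0%R]| <= 1)%N.
Proof.
apply: leq_trans (_ : #|[set (i, p i)]| <= 1)%N; last by rewrite cards1.
apply: subset_leq_card; apply/subsetP => -[k z].
rewrite !inE ffunE /= => /andP[/eqP -> ].
by have [->|_] := eqVneq z (p i); rewrite ?eqxx.
Qed.

Lemma card_row i : #|row i| = #|Z|.
Proof.
rewrite -(card_imset (mem Z) (f := fun z => (i, z))); last by move=> z z' [].
apply: eq_card => -[k z]; rewrite inE.
by apply/eqP/imsetP => [/= ->|[z' _ [-> _]]]; first exists z.
Qed.

Variable z0 : Z.

Lemma row_inj : injective row.
Proof.
move=> i k E; have : (i, z0) \in row i by rewrite inE.
by rewrite E inE => /eqP.
Qed.

Lemma card_rows : #|[set row i | i : I]| = #|I|.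
Proof. by rewrite (card_imset _ row_inj). Qed.

Lemma partition_rows : partition [set row i | i : I] [set: I * Z].
Proof.
have row0 : set0 \notin [set row i | i : I].
  by apply/imsetP => -[i _ /setP/(_ (i, z0))]; rewrite !inE eqxx.
apply/and3P; split=> //.
  rewrite cover_imset; apply/eqP/setP => x; rewrite inE; apply/bigcupP.
  by exists x.1; rewrite ?inE.
apply: (proj1 (trivIimset _ row0)) => i k _ _ nki.
apply/pred0P => x /=; rewrite !inE; apply/negP => /andP[/eqP -> /eqP E].
by rewrite E eqxx in nki.
Qed.

End SpreadWord.

Arguments row {I Z} i.
Arguments card_rows {I Z} z0.
Arguments partition_rows {I Z} z0.

Lemma difference_matrix_diff_inj g (M : 'M['Z_g]_(4, g)) (r s : 'I_4) :
  (1 < g)%N -> difference_matrix M -> (r < s)%N ->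
  injective (fun j => M r j - M s j)%R.
Proof.
move=> hg dm rs j k.
suff /image_injP inj : #|image (fun j => M r j - M s j)%R 'I_g| == #|'I_g| by exact: inj.
rewrite eqn_leq; apply/andP; split.
  by rewrite (leq_trans (card_size _)) // size_map -cardE.
rewrite card_ord -{1}[g]Zp_cast // -[X in (X <= _)%N]card_ord.
apply: subset_leq_card; apply/subsetP => z _.
by have [i <-] := dm r s rs z; apply: image_f.
Qed.

Lemma difference_matrix_rows_agree g (M : 'M['Z_g]_(4, g)) (r s : 'I_4) j j' c c' :
  (1 < g)%N -> difference_matrix M -> (r < s)%N ->
  (M r j + c = M r j' + c')%R -> (M s j + c = M s j' + c')%R -> j = j' /\ c = c'.
Proof.
move=> hg dm rs Er Es.
have Ej : j = j'.
  apply: (difference_matrix_diff_inj hg dm rs) => /=.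
  have cancel_c (x y d : 'Z_g) : (x + d - (y + d) = x - y)%R.
    by rewrite opprD addrACA subrr addr0.
  by rewrite -(cancel_c _ _ c) Er Es cancel_c.
by split=> //; move: Er; rewrite Ej => /addrI.
Qed.

Definition i0 : 'I_4 := Ordinal (isT : (0 < 4)%N).
Definition i1 : 'I_4 := Ordinal (isT : (1 < 4)%N).
Definition i2 : 'I_4 := Ordinal (isT : (2 < 4)%N).
Definition i3 : 'I_4 := Ordinal (isT : (3 < 4)%N).

Lemma big_ord4 (F : 'I_4 -> nat) : \sum_(i < 4) F i = (F i0 + F i1 + F i2 + F i3)%N.
Proof.
rewrite !big_ord_recr big_ord0 /= add0n.
by congr (F _ + F _ + F _ + F _)%N; apply: val_inj.
Qed.

Lemma six_le_sum_pairwise_apart (b : 'I_4 -> bool) :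
  (forall r s : 'I_4, (r < s)%N -> ~~ (b r && b s)) ->
  (6 <= \sum_(i < 4) (if b i then 0 else 2))%N.
Proof.
move=> apart; rewrite big_ord4.
move: (apart i0 i1 isT) (apart i0 i2 isT) (apart i0 i3 isT).
move: (apart i1 i2 isT) (apart i1 i3 isT) (apart i2 i3 isT).
by case: (b i0); case: (b i1); case: (b i2); case: (b i3).
Qed.

Lemma six_le_sum_halves_apart (b : 'I_4 -> bool) :
  ~~ [&& b i0, b i1 & b i2 || b i3] -> ~~ [&& b i2, b i3 & b i0 || b i1] ->
  (6 <= \sum_(i < 4) (if b i then 1 else 2))%N.
Proof.
rewrite big_ord4.
by case: (b i0); case: (b i1); case: (b i2); case: (b i3).
Qed.

Section Construction.
Variables (g : nat) (M : 'M['Z_g]_(4, g)).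
Local Open Scope ring_scope.

Definition shift (e : bool) (i : 'I_4) : 'Z_g := ((2 <= i)%N && e)%:R.

Definition position (t : 'I_g * 'Z_g * bool) (i : 'I_4) : 'Z_g :=
  M i t.1.1 + (t.1.2 + shift t.2 i).

Definition symbol (e : bool) (i : 'I_4) : 'Z_3 := if (i < 2)%N == e then 2%:R else 1.

Definition codeword (t : 'I_g * 'Z_g * bool) : {ffun 'I_4 * 'Z_g -> 'Z_3} :=
  spread_word (position t) (symbol t.2).

Lemma symbol_neq0 e i : symbol e i != 0.
Proof. by rewrite /symbol; case: (_ == e). Qed.

Lemma symbol_flip e e' i : e != e' -> symbol e i != symbol e' i.
Proof. by rewrite /symbol; case: e; case: e'; case: (i < 2)%N. Qed.

Lemma card_symbol e (c : 'Z_3) : c != 0 -> #|[set i | symbol e i == c]| = 2%N.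
Proof.
have : c \in [:: 1; 2%:R; 0] by case: c => -[|[|[|]]].
rewrite !inE => /or3P[] /eqP -> // _.
all: by case: e; rewrite -sum1_card big_mkcond !big_ord_recr big_ord0 !inE.
Qed.

Lemma shift_flip e e' (i : 'I_4) : e != e' -> (2 <= i)%N -> shift e i != shift e' i.
Proof.
by rewrite /shift => + ->; case: e; case: e' => //= _; rewrite ?oner_neq0 // eq_sym oner_neq0.
Qed.

Lemma shift_low e (i : 'I_4) : (i < 2)%N -> shift e i = 0.
Proof. by rewrite /shift ltnNge => /negPf ->. Qed.

Hypotheses (hg : (1 < g)%N) (dm : difference_matrix M).

Lemma same_class_rows_agree t t' (r s : 'I_4) : t.2 = t'.2 -> (r < s)%N ->
  position t r = position t' r -> position t s = position t' s -> t = t'.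
Proof.
case: t t' => [[j a] e] [[j' a'] e'] /= <- rs.
rewrite /position /= !addrA => /addIr Er /addIr Es.
by case: (difference_matrix_rows_agree hg dm rs Er Es) => /= -> ->.
Qed.

Lemma cross_class_low_rows_agree t t' (k : 'I_4) : t.2 != t'.2 -> (2 <= k)%N ->
  position t i0 = position t' i0 -> position t i1 = position t' i1 ->
  position t k != position t' k.
Proof.
case: t t' => [[j a] e] [[j' a'] e'] /= ne hk; rewrite /position /= => E0 E1.
have [<- Ea] := difference_matrix_rows_agree hg dm (isT : (i0 < i1)%N) E0 E1.
move: Ea; rewrite !(shift_low _ (isT : (i0 < 2)%N)) !addr0 => <-.
by rewrite !(inj_eq (addrI _)) shift_flip.
Qed.

Lemma cross_class_high_rows_agree t t' (k : 'I_4) : t.2 != t'.2 -> (k < 2)%N ->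
  position t i2 = position t' i2 -> position t i3 = position t' i3 ->
  position t k != position t' k.
Proof.
case: t t' => [[j a] e] [[j' a'] e'] /= ne hk; rewrite /position /= => E2 E3.
have [<- Ea] := difference_matrix_rows_agree hg dm (isT : (i2 < i3)%N) E2 E3.
rewrite !shift_low // !addr0 (inj_eq (addrI _)).
by apply: contra_neq (shift_flip ne (isT : (2 <= i2)%N)) => Eaa; move: Ea; rewrite Eaa => /addrI.
Qed.

Lemma hamming_codeword t t' : t != t' -> (6 <= hamming (codeword t) (codeword t'))%N.
Proof.
move=> ne; rewrite hamming_spread_word; [|exact: symbol_neq0..].
have [Ee|ne_e] := eqVneq t.2 t'.2.
  rewrite Ee; under eq_bigr do rewrite eqxx.
  apply: six_le_sum_pairwise_apart => r s rs; apply/andP => -[/eqP Er /eqP Es].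
  by move/eqP: ne; apply; apply: same_class_rows_agree Er Es.
under eq_bigr do rewrite symbol_flip //.
apply: six_le_sum_halves_apart; apply/and3P => -[/eqP E0 /eqP E1 /orP[]].
- by apply/negP; apply: cross_class_low_rows_agree.
- by apply/negP; apply: cross_class_low_rows_agree.
- by apply/negP; apply: cross_class_high_rows_agree.
- by apply/negP; apply: cross_class_high_rows_agree.
Qed.

End Construction.

Theorem mainTheorem6 (g : nat) (hg : (1 < g)%N) :
  (exists M : 'M['Z_g]_(4, g), difference_matrix M) ->
  exists (X : finType) (G : {set {set X}}) (C : {set {ffun X -> 'Z_3}}),
    [/\ is_GDC G C 2 2 6, GDC_type_uniform G g 4 & #|C| = (2 * g ^ 2)%N].
Proof.
move=> [M dm].
have card_Zg : #|{: 'Z_g}| = g by rewrite card_ord Zp_cast.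
have codeword_inj : injective (codeword M).
  move=> t t' E; apply/eqP/contraT => /(hamming_codeword hg dm).
  by rewrite E hammingxx.
exists ('I_4 * 'Z_g)%type, [set row i | i : 'I_4], [set codeword M t | t in setT].
split.
- split.
  + exact: partition_rows 0%R.
  + by move=> _ /imsetP[t _ ->]; split; rewrite card_spread_word_eq ?card_symbol.
  + move=> _ _ /imsetP[t _ ->] /imsetP[t' _ ->] ne.
    by apply: (hamming_codeword hg dm); apply: contraNneq ne => ->.
  + by move=> _ _ /imsetP[t _ ->] /imsetP[i _ ->]; apply: card_spread_word_row.
- split=> [|_ /imsetP[i _ ->]]; first by rewrite (card_rows 0%R) card_ord.
  by rewrite card_row card_Zg.
- by rewrite card_imset // cardsT !card_prod card_bool card_ord card_Zg mulnn mulnC.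
Qed.
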